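(* Let $\prec$ be a reflection order on $T$. Suppose $\Gamma$ contains a diamond with distinct vertices $b,l,r,w$ and edges $b\xrightarrow{t_1}l\xrightarrow{t_2}w$ and $b\xrightarrow{t_1'}r\xrightarrow{t_2'}w$, where $t_1\prec t_1'$. Then $$t_1\prec t_2\succ t_2'\prec t_1'\succ t_1.$$ In particular, if $x_1\to x_2\to x_4$ is an increasing pair of edges, then its diamond flip (the unique pair of edges $x_1\to x_3\to x_4$ such that $\{x_1,x_2,x_3,x_4\}$ is a diamond) is a decreasing pair of edges.
   Context: $S_n$ is the symmetric group with simple reflections $s_i=(i\ i{+}1)$, length function $\ell$, and $T$ the set of all transpositions (reflections). The Bruhat graph $\Gamma$ is the directed graph on $S_n$ with an edge $w\xrightarrow{t}tw$, labelled by $t$, whenever $t\in T$ and $\ell(w)<\ell(tw)$. A reflection order is a total order $\prec$ on $T$ such that for all $1\le a<b<c\le n$ either $(a\,b)\prec(a\,c)\prec(b\,c)$ or $(b\,c)\prec(a\,c)\prec(a\,b)$. A pair of consecutive edges $x\xrightarrow{t}y\xrightarrow{t'}z$ is increasing if $t\prec t'$ and decreasing if $t\succ t'$. A diamond is a subgraph of $\Gamma$ with four distinct vertices $x_1,x_2,x_3,x_4$ and edges $x_1\to x_2\to x_4$, $x_1\to x_3\to x_4$. *)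

From mathcomp Require Import all_boot all_order all_fingroup.
Set Implicit Arguments. Unset Strict Implicit. Unset Printing Implicit Defensive.

Section Bruhat.
Variable n : nat.

Definition is_refl (t : 'S_n) : bool :=
  [exists i : 'I_n, exists j : 'I_n, (i != j) && (t == tperm i j)].

(* Coxeter length of w in S_n = number of inversions *)
Definition perm_length (w : 'S_n) : nat :=
  #|[set p : 'I_n * 'I_n | (p.1 < p.2)%N && (w p.2 < w p.1)%N]|.

(* Composition t w (first w, then t) as functions. In mathcomp
   (s * t) x = t (s x), so t w is written  w * t. *)
Definition lmul (t w : 'S_n) : 'S_n := (w * t)%g.

Definition bedge (w t v : 'S_n) : bool :=
  [&& is_refl t, v == lmul t w & perm_length w < perm_length v].

(* A reflection order: a strict total order on T (the relation is only
   meaningful on T) such that for all a<b<c either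
   (a b) < (a c) < (b c) or (b c) < (a c) < (a b). *)
Definition reflection_order (prec : rel 'S_n) : Prop :=
  [/\ (forall t, is_refl t -> ~~ prec t t),
      (forall t1 t2 t3, is_refl t1 -> is_refl t2 -> is_refl t3 ->
         prec t1 t2 -> prec t2 t3 -> prec t1 t3),
      (forall t1 t2, is_refl t1 -> is_refl t2 -> t1 != t2 ->
         prec t1 t2 || prec t2 t1) &
      (forall a b c : 'I_n, (a < b)%N -> (b < c)%N ->
         (prec (tperm a b) (tperm a c) && prec (tperm a c) (tperm b c))
         || (prec (tperm b c) (tperm a c) && prec (tperm a c) (tperm a b)))].

Definition diamond (x1 x2 x3 x4 s1 s2 s3 s4 : 'S_n) : bool :=
  [&& uniq [:: x1; x2; x3; x4], bedge x1 s1 x2, bedge x2 s2 x4,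
      bedge x1 s3 x3 & bedge x3 s4 x4].

End Bruhat.

From mathcomp Require Import all_boot all_order all_fingroup zify.
Set Implicit Arguments. Unset Strict Implicit. Unset Printing Implicit Defensive.

(* In S_n, t1 t2 = t1' t2' with t1 <> t1' and t1 t2 <> 1 (both forced by the
   diamond) leaves two shapes: either t1' = t2 and t2' = t1, and the claim is
   immediate, or the four reflections are transpositions of three points
   i, j, k with (t1, t2) = ((i j), (j k)) and (t1', t2') equal to
   ((j k), (i k)) or ((i k), (i j)).  An edge w -> (x y) w with x < y forces
   w^-1 x < w^-1 y, so comparing the two edges of the diamond whose labels
   share a point shows that this point is not the middle one of i, j, k.
   A reflection order puts the transposition of the least and the greatest of
   three points between the other two, hence the two transpositions through a
   non-middle point lie on the same side of the third one, which is the
   required inequality.  The second claim follows by applying the first one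
   to the diamond or to its flip. *)

Section Inversions.
Variable n : nat.
Implicit Types (w : 'S_n) (P Q i j : 'I_n).

Definition inversions w : {set 'I_n * 'I_n} :=
  [set p : 'I_n * 'I_n | (p.1 < p.2)%N && (w p.2 < w p.1)%N].

Lemma perm_lengthE w : perm_length w = #|inversions w|.
Proof. by []. Qed.

(* tpermP for ordinals, with the disequalities stated on values so that lia
   can use them. *)
Variant tperm_ord_spec P Q i : 'I_n -> Type :=
  | TpermOrdFirst of i = P : tperm_ord_spec P Q i Q
  | TpermOrdSecond of i = Q : tperm_ord_spec P Q i P
  | TpermOrdNone of (i : nat) <> P & (i : nat) <> Q : tperm_ord_spec P Q i i.

Lemma tperm_ordP P Q i : tperm_ord_spec P Q i (tperm P Q i).
Proof. by case: tpermP => [||iP iQ]; constructor => // /val_inj. Qed.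

Lemma tperm_between P Q i : (P < Q)%N ->
  (P < tperm P Q i < Q)%N = (P < i < Q)%N.
Proof. by move=> PQ; case: tperm_ordP => [->|->|]; lia. Qed.

(* Pairs meeting the open interval (P, Q) are fixed and the others are moved
   by (P Q): this injects the inversions of w into those of w (P Q) other
   than (P, Q). *)
Definition swap_outside P Q (p : 'I_n * 'I_n) : 'I_n * 'I_n :=
  if (P < p.1 < Q)%N || (P < p.2 < Q)%N then p
  else (tperm P Q p.1, tperm P Q p.2).

Lemma swap_outsideK P Q : (P < Q)%N -> involutive (swap_outside P Q).
Proof.
move=> PQ [i j]; rewrite /swap_outside /=.
case out: ((P < i < Q)%N || (P < j < Q)%N); first by rewrite /= out.
by rewrite /= !tperm_between // out !tpermK.
Qed.

Lemma tperm_inversion_between w P Q i j :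
  (w P < w Q)%N -> (i < j)%N -> (w j < w i)%N ->
  (P < i < Q)%N || (P < j < Q)%N ->
  (w (tperm P Q j) < w (tperm P Q i))%N.
Proof.
by do 2!case: tperm_ordP => [->|->|]; lia.
Qed.

Lemma tperm_inversion_outside w P Q i j :
  (P < Q)%N -> (w P < w Q)%N -> (i < j)%N -> (w j < w i)%N ->
  ~~ (P < i < Q)%N -> ~~ (P < j < Q)%N -> (tperm P Q i < tperm P Q j)%N.
Proof.
by do 2!case: tperm_ordP => [->|->|]; lia.
Qed.

Lemma perm_length_mul_tperm w P Q : (P < Q)%N -> (w P < w Q)%N ->
  (perm_length w < perm_length (w * tperm (w P) (w Q)))%N.
Proof.
move=> PQ wPQ; set v := (w * _)%g.
have vE x : v x = w (tperm P Q x) by rewrite permM (inj_tperm _ _ _ perm_inj).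
have PQv : (P, Q) \in inversions v by rewrite inE /= !vE tpermL tpermR PQ.
rewrite !perm_lengthE -(card_imset _ (can_inj (swap_outsideK PQ))).
rewrite [#|inversions v|](cardsD1 (P, Q)) PQv ltnS; apply/subset_leq_card/subsetP.
move=> _ /imsetP [[i j] + ->]; rewrite !inE /swap_outside /= => /andP [ij wji].
case: ifP => [btw | /negbT]; rewrite /= !vE.
  rewrite ij tperm_inversion_between //= andbT.
  by apply/eqP => -[ei ej]; move: btw; rewrite ei ej; lia.
rewrite negb_or => /andP [iout jout]; rewrite !tpermK wji andbT.
rewrite (tperm_inversion_outside PQ wPQ) //= andbT.
apply/eqP => -[/(congr1 (tperm P Q)) + /(congr1 (tperm P Q))].
rewrite !tpermK tpermL tpermR => ei ej; move: ij; rewrite ei ej; lia.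
Qed.

End Inversions.

Section BruhatEdges.
Variable n : nat.
Implicit Types (w v t : 'S_n) (x y : 'I_n).

Lemma is_refl_tperm x y : x != y -> is_refl (tperm x y).
Proof.
by move=> xy; apply/existsP; exists x; apply/existsP; exists y; rewrite xy eqxx.
Qed.

Lemma is_reflP t : is_refl t -> exists x y, x != y /\ t = tperm x y.
Proof. by case/existsP => x /existsP [y /andP [xy /eqP ->]]; exists x, y. Qed.

Lemma bedge_refl w t v : bedge w t v -> is_refl t.
Proof. by case/and3P. Qed.

Lemma bedgeE w t v : bedge w t v -> v = (w * t)%g.
Proof. by case/and3P => _ /eqP. Qed.

Lemma bedge_length w t v : bedge w t v -> (perm_length w < perm_length v)%N.
Proof. by case/and3P. Qed.

Lemma bedge_tperm_ltn w v x y : bedge w (tperm x y) v -> (x < y)%N ->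
  ((w^-1)%g x < (w^-1)%g y)%N.
Proof.
move=> e xy; rewrite ltn_neqAle; apply/andP; split.
  by apply: contraTneq xy => /val_inj/perm_inj ->; rewrite ltnn.
rewrite leqNgt; apply/negP => yx.
(* otherwise the edge would also go up when read backwards from v to w *)
have vy : v ((w^-1)%g y) = x by rewrite (bedgeE e) permM permKV tpermR.
have vx : v ((w^-1)%g x) = y by rewrite (bedgeE e) permM permKV tpermL.
have := perm_length_mul_tperm (w := v) yx; rewrite vy vx => /(_ xy).
rewrite (bedgeE e) -mulgA tperm2 mulg1 -(bedgeE e).
by rewrite ltnNge ltnW // (bedge_length e).
Qed.

Lemma bedge_tperm_ltnE w v x y : bedge w (tperm x y) v ->
  ((w^-1)%g x < (w^-1)%g y)%N = (x < y)%N.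
Proof.
move=> e; case: (ltngtP x y) => [xy | yx | /val_inj exy].
- exact: bedge_tperm_ltn e xy.
- by rewrite tpermC in e; apply/negbTE; rewrite -leqNgt ltnW ?(bedge_tperm_ltn e).
- by have := bedge_length e; rewrite (bedgeE e) exy tperm1 mulg1 ltnn.
Qed.

End BruhatEdges.

Section TranspositionProducts.
Variable n : nat.
Implicit Types (a b c p q r s x y z w v : 'I_n).

Lemma tperm_of_image r s a b : tperm r s a = b -> a != b -> tperm r s = tperm a b.
Proof. by case: tpermP => [-> <-|-> <-|_ _ -> /eqP //] _; rewrite tpermC. Qed.

Lemma mul_tperm_moved p q r s : p != q ->
  (tperm p q * tperm r s != 1)%g -> (tperm p q * tperm r s)%g p != p.
Proof.
move=> pq; apply: contra_neq; rewrite permM tpermL => /tperm_of_image ->.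
  by rewrite tpermC tperm2.
by rewrite eq_sym.
Qed.

Lemma mul_tperm_support x y z w v : (tperm x y * tperm z w)%g v != v ->
  v \in [:: x; y; z; w].
Proof.
apply: contraR; rewrite !inE !negb_or => /and4P [vx vy vz vw].
by rewrite permM !tpermD // eq_sym.
Qed.

Lemma tperm_mem_triple a b c p q :
  p \in [:: a; b; c] -> q \in [:: a; b; c] -> p != q ->
  tperm p q \in [:: tperm a b; tperm b c; tperm a c].
Proof.
rewrite !inE => /or3P [] /eqP -> /or3P [] /eqP ->; rewrite ?eqxx ?orbT //.
all: by rewrite tpermC eqxx ?orbT.
Qed.

Lemma tperm_cycle_factor a b c p q r s : uniq [:: a; b; c] -> p != q ->
  (tperm a b * tperm b c = tperm p q * tperm r s)%g -> tperm p q != tperm a b ->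
  (tperm p q = tperm b c /\ tperm r s = tperm a c) \/
  (tperm p q = tperm a c /\ tperm r s = tperm a b).
Proof.
rewrite /= !inE negb_or => /and3P [/andP [ab ac] bc _] pq E pq_ab.
have cycle_bc : (tperm a b * tperm b c = tperm b c * tperm a c)%g.
  have : (tperm a b ^ tperm b c)%g = tperm a c.
    by rewrite tpermJ tpermL tpermD // eq_sym.
  by move=> <-; rewrite -conjgC.
have cycle_ac : (tperm a b * tperm b c = tperm a c * tperm a b)%g.
  have : (tperm a c ^ tperm a b)%g = tperm b c.
    by rewrite tpermJ tpermL tpermD // eq_sym.
  by move=> <-; rewrite -conjgC.
have u1 : (tperm p q * tperm r s != 1)%g.
  rewrite -E; apply/eqP => /(congr1 (fun u : 'S_n => u a)) /=.
  by rewrite permM !tpermL perm1; apply/eqP; rewrite eq_sym.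
have supp v : (tperm p q * tperm r s)%g v != v -> v \in [:: a; b; c].
  by rewrite -E => /mul_tperm_support; rewrite !inE => /or4P [] ->; rewrite ?orbT.
have /supp p_abc := mul_tperm_moved pq u1.
have /supp q_abc : (tperm p q * tperm r s)%g q != q.
  rewrite tpermC; apply: mul_tperm_moved; first by rewrite eq_sym.
  by rewrite tpermC.
have := tperm_mem_triple p_abc q_abc pq; rewrite !inE (negbTE pq_ab) /=.
case/orP => /eqP pqE; [left | right]; split => //.
  by apply: (mulgI (tperm p q)); rewrite -E pqE cycle_bc.
by apply: (mulgI (tperm p q)); rewrite -E pqE cycle_ac.
Qed.

Lemma tperm_disjoint_factor x y z w p q r s : uniq [:: x; y; z; w] -> p != q ->
  (tperm x y * tperm z w = tperm p q * tperm r s)%g -> tperm p q != tperm x y ->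
  tperm p q = tperm z w /\ tperm r s = tperm x y.
Proof.
rewrite /= !inE !negb_or => /and4P [/and3P [xy xz xw] /andP [yz yw] zw _].
move=> pq E pq_xy; set u := (tperm x y * tperm z w)%g in E.
have commute_u : u = (tperm z w * tperm x y)%g.
  have : (tperm x y ^ tperm z w)%g = tperm x y.
    by rewrite tpermJ !tpermD // eq_sym.
  by rewrite /u conjgC => ->.
have uK : involutive u.
  move=> v; rewrite -permM {1}commute_u /u mulgA -(mulgA (tperm z w)).
  by rewrite tperm2 mulg1 tperm2 perm1.
have ux : u x = y by rewrite /u permM tpermL tpermD // eq_sym.
have u1 : (tperm p q * tperm r s != 1)%g.
  by rewrite -E; apply: contra_neq xy => u1; rewrite -[RHS]ux u1 perm1.
have up_p := mul_tperm_moved pq u1; rewrite -E in up_p.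
have q_up : q = u p.
  have up : u p = tperm r s q by rewrite E permM tpermL.
  have uq : u q = tperm r s p by rewrite E permM tpermR.
  apply/eqP; apply: contraT => q_ne.
  have rsE : tperm r s = tperm q (u p) by apply: tperm_of_image.
  have : u q = p by rewrite uq rsE tpermD // eq_sym.
  by move/(congr1 u); rewrite uK => qE; rewrite qE eqxx in q_ne.
suff pqE : tperm p q = tperm z w.
  by split => //; apply: (mulgI (tperm p q)); rewrite -E commute_u pqE.
have uy : u y = x by rewrite -[in LHS]ux uK.
have uz : u z = w by rewrite /u permM (tpermD xz yz) tpermL.
have uw : u w = z by rewrite -[in LHS]uz uK.
move: pq_xy; rewrite q_up; have := mul_tperm_support up_p; rewrite !inE.
by case/or4P => /eqP ->; rewrite ?ux ?uy ?uz ?uw ?eqxx // tpermC ?eqxx.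
Qed.

Lemma tperm_pair_cases x y z w : x != y -> z != w -> tperm x y != tperm z w ->
  uniq [:: x; y; z; w] \/
  exists a b c,
    [/\ uniq [:: a; b; c], tperm x y = tperm a b & tperm z w = tperm b c].
Proof.
move=> xy zw t_ne.
have share a b c : tperm x y = tperm a b -> tperm z w = tperm b c ->
    a != b -> b != c -> uniq [:: x; y; z; w] \/
    exists a b c,
      [/\ uniq [:: a; b; c], tperm x y = tperm a b & tperm z w = tperm b c].
  move=> Exy Ezw ab bc; right; exists a, b, c; split => //=.
  rewrite !inE negb_or ab bc !andbT; apply: contraNneq t_ne => ac.
  by rewrite Exy Ezw ac tpermC.
have [? | yz] := eqVneq y z; first by subst z; apply: (share x y w).
have [? | yw] := eqVneq y w.
  by subst w; apply: (share x y z); rewrite // 1?tpermC // eq_sym.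
have [? | xz] := eqVneq x z.
  by subst z; apply: (share y x w); rewrite // 1?tpermC // eq_sym.
have [? | xw] := eqVneq x w.
  by subst w; apply: (share y x z); rewrite // 1?tpermC // eq_sym.
by left; rewrite /= !inE !negb_or xy xz xw yz yw zw.
Qed.

End TranspositionProducts.

Section ReflectionOrders.
Variables (n : nat) (prec : rel 'S_n).
Hypothesis prec_order : reflection_order prec.
Implicit Types (s t u : 'S_n) (a b c : 'I_n).

Definition prec_between s t u := (prec s t && prec t u) || (prec u t && prec t s).

Lemma prec_betweenC s t u : prec_between s t u = prec_between u t s.
Proof. by rewrite /prec_between orbC. Qed.

Lemma prec_asym s t : is_refl s -> is_refl t -> prec s t -> ~~ prec t s.
Proof.
case: prec_order => irr tr _ _ Rs Rt st; apply/negP => ts.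
by have := irr s Rs; rewrite (tr s t s).
Qed.

Lemma prec_between_endpoint s t u : is_refl s -> is_refl t -> is_refl u ->
  prec_between s t u -> prec u s = prec u t /\ prec s u = prec t u.
Proof.
case: prec_order => _ tr _ _ Rs Rt Ru /orP [] /andP [h1 h2].
  have su : prec s u by exact: tr h1 h2.
  by rewrite su h2 (negbTE (prec_asym Rs Ru su)) (negbTE (prec_asym Rt Ru h2)).
have us : prec u s by exact: tr h1 h2.
by rewrite us h1 (negbTE (prec_asym Ru Rs us)) (negbTE (prec_asym Ru Rt h1)).
Qed.

Lemma tperm_prec_between a b c : (a < b < c)%N || (c < b < a)%N ->
  prec_between (tperm a b) (tperm a c) (tperm b c).
Proof.
case: prec_order => _ _ _ ax /orP [] /andP [ab bc]; first exact: ax.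
have := ax c b a ab bc; rewrite prec_betweenC.
by rewrite (tpermC c b) (tpermC c a) (tpermC b a) /prec_between orbC.
Qed.

Lemma prec_tperm_extreme a b c :
  a != b -> a != c -> b != c -> (a < b)%N = (a < c)%N ->
  prec (tperm b c) (tperm a b) = prec (tperm b c) (tperm a c) /\
  prec (tperm a b) (tperm b c) = prec (tperm a c) (tperm b c).
Proof.
wlog b_lt_c : b c / (b < c)%N.
  move=> hwlog ab ac bc ext.
  case: (ltngtP b c) => [lt_bc | lt_cb | /val_inj/eqP]; first exact: hwlog.
    have [h1 h2] := hwlog c b lt_cb ac ab (contra_neq esym bc) (esym ext).
    by rewrite (tpermC c b) in h1 h2; rewrite h1 h2.
  by rewrite (negbTE bc).
move=> ab ac bc ext; have R := @is_refl_tperm n.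
have [a_lt_b | b_le_a] := ltnP a b.
  apply: prec_between_endpoint; rewrite ?R //.
  by apply: tperm_prec_between; rewrite a_lt_b b_lt_c.
have c_lt_a : (c < a)%N.
  by rewrite ltn_neqAle val_eqE eq_sym ac leqNgt -ext -leqNgt.
have bca : (b < c < a)%N || (a < c < b)%N by rewrite b_lt_c c_lt_a.
have Rca := R c a (contra_neq esym ac); have Rba := R b a (contra_neq esym ab).
have [] := prec_between_endpoint Rca Rba (R b c bc)
  (etrans (prec_betweenC _ _ _) (tperm_prec_between bca)).
by rewrite !(tpermC _ a) => -> ->.
Qed.

End ReflectionOrders.

Section Diamonds.
Variable n : nat.
Implicit Types (b l r w : 'S_n) (i j k : 'I_n).

Lemma refl_mul_factor (t1 t2 t1' t2' : 'S_n) :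
  is_refl t1 -> is_refl t2 -> is_refl t1' -> is_refl t2' ->
  (t1 * t2 = t1' * t2')%g -> t1' != t1 -> (t1 * t2 != 1)%g ->
  (t1' = t2 /\ t2' = t1) \/
  exists i j k, [/\ uniq [:: i; j; k], t1 = tperm i j, t2 = tperm j k &
    (t1' = tperm j k /\ t2' = tperm i k) \/ (t1' = tperm i k /\ t2' = tperm i j)].
Proof.
move=> /is_reflP [x [y [xy ->]]] /is_reflP [z [v [zv ->]]].
move=> /is_reflP [p [q [pq ->]]] /is_reflP [r [s [_ ->]]] E ne u1.
have t12 : tperm x y != tperm z v by apply: contraNneq u1 => ->; rewrite tperm2.
case: (tperm_pair_cases xy zv t12) => [disj | [i [j [k [ijk Exy Ezv]]]]].
  by left; case: (tperm_disjoint_factor disj pq E ne) => -> ->.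
right; exists i, j, k; rewrite Exy Ezv in E ne *; split => //.
exact: tperm_cycle_factor.
Qed.

Lemma diamond_labels b l r w t1 t2 t1' t2' : diamond b l r w t1 t2 t1' t2' ->
  [/\ (t1 * t2 = t1' * t2')%g, t1' != t1 & (t1 * t2 != 1)%g].
Proof.
case/and5P => U e1 e2 e3 e4; move: U.
rewrite /= !inE !negb_or => /and4P [/and3P [_ _ bw] /andP [lr _] _ _]; split.
- apply: (mulgI b); rewrite !mulgA -(bedgeE e1) -(bedgeE e3) -(bedgeE e2).
  exact: bedgeE e4.
- by apply: contraNneq lr => e; rewrite (bedgeE e1) (bedgeE e3) e.
- by apply: contraNneq bw => u1; rewrite (bedgeE e2) (bedgeE e1) -mulgA u1 mulg1.
Qed.

Lemma diamond_flip b l r w t1 t2 t1' t2' : diamond b l r w t1 t2 t1' t2' ->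
  diamond b r l w t1' t2' t1 t2.
Proof.
case/and5P => U e1 e2 e3 e4; rewrite /diamond e1 e2 e3 e4 !andbT.
move: U; rewrite /= !inE !negb_or.
case/and4P => /and3P [bl br bw] /andP [lr lw] rw _.
by rewrite bl br bw lw rw eq_sym lr.
Qed.

Lemma bedge_tperm_extreme b l w i j k : i != j -> i != k ->
  bedge b (tperm i j) l -> bedge (b * tperm j k)%g (tperm i k) w ->
  (i < j)%N = (i < k)%N.
Proof.
move=> ij ik e1 e2; rewrite -(bedge_tperm_ltnE e1) -(bedge_tperm_ltnE e2).
by rewrite invMg tpermV !permM tpermR tpermD // eq_sym.
Qed.

End Diamonds.

Section DiamondOrders.
Variables (n : nat) (prec : rel 'S_n).
Hypothesis prec_order : reflection_order prec.

Lemma diamond_prec (b l r w t1 t2 t1' t2' : 'S_n) :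
  diamond b l r w t1 t2 t1' t2' -> prec t1 t1' ->
  [/\ prec t1 t2, prec t2' t2, prec t2' t1' & prec t1 t1'].
Proof.
move=> D lt1; have [E ne u1] := diamond_labels D.
case/and5P: D => _ e1 e2 e3 e4.
have [[? ?] | [i [j [k [ijk Et1 Et2 cases]]]]] :=
  refl_mul_factor (bedge_refl e1) (bedge_refl e2) (bedge_refl e3)
    (bedge_refl e4) E ne u1.
  by subst t1' t2'; split.
move: ijk; rewrite /= !inE negb_or => /and3P [/andP [ij ik] jk _].
rewrite Et1 Et2 in e1 e2 lt1 *.
case: cases => -[Et1' Et2']; rewrite Et1' Et2' in e3 e4 lt1 *.
  rewrite (bedgeE e3) in e4.
  have ext := bedge_tperm_extreme ij ik e1 e4.
  by have [_ <-] := prec_tperm_extreme prec_order ij ik jk ext; split.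
have ki := contra_neq esym ik; have kj := contra_neq esym jk.
rewrite (tpermC i k) in e3; rewrite (bedgeE e1) (tpermC j k) in e2.
have ext := bedge_tperm_extreme ki kj e3 e2.
have [same _] := prec_tperm_extreme prec_order ki kj ij ext.
by rewrite !(tpermC k) in same; rewrite -same; split.
Qed.

End DiamondOrders.

Theorem lemma3p2 (n : nat) (prec : rel 'S_n) :
  reflection_order prec ->
  (forall b l r w t1 t2 t1' t2' : 'S_n,
     diamond b l r w t1 t2 t1' t2' -> prec t1 t1' ->
     [/\ prec t1 t2, prec t2' t2, prec t2' t1' & prec t1 t1'])
  /\
  (forall x1 x2 x3 x4 s1 s2 s3 s4 : 'S_n,
     bedge x1 s1 x2 -> bedge x2 s2 x4 -> prec s1 s2 ->
     diamond x1 x2 x3 x4 s1 s2 s3 s4 -> prec s4 s3).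
Proof.
move=> prec_order; split => [|x1 x2 x3 x4 s1 s2 s3 s4 e1 e2 s12 D].
  exact: diamond_prec.
have [_ ne31 _] := diamond_labels D.
case/and5P: (D) => _ _ _ e3 _.
have [_ _ prec_total _] := prec_order.
have /orP [s13 | s31] :=
  prec_total s1 s3 (bedge_refl e1) (bedge_refl e3) (contra_neq esym ne31).
  by case: (diamond_prec prec_order D s13).
have [_ _ s21 _] := diamond_prec prec_order (diamond_flip D) s31.
by have := prec_asym prec_order (bedge_refl e1) (bedge_refl e2) s12; rewrite s21.
Qed.
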